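(* Let $k$ be a function assigning to each prime power $q$ a positive integer $k(q)$, and suppose $k(q)=o(q)$, i.e. $k(q)/q\to 0$ as $q\to\infty$ over prime powers. Then for every sufficiently large prime power $q$, writing $k=k(q)$, there exists a finite connected graph $G$ of order $2q^{2}+(1-k)q$ in which every vertex has degree either $q+1-k$ or $q$, and whose cop number satisfies $q+1-k\le c(G)\le q$.
   Context: Graphs are finite, simple and connected, and are considered reflexive: each vertex carries a loop, so that a player may stay on its vertex. The game of Cops and Robbers on a graph $G$ is played as follows. First, a set of $m$ cops each choose a vertex (several cops may choose the same vertex). Then the robber chooses a vertex. After that, the players alternate turns, the cops moving first. On the cops' turn, each cop either stays on its vertex or moves to an adjacent vertex. On the robber's turn, the robber either stays or moves to an adjacent vertex. Both sides have full information at all times. The cops win if, after finitely many rounds, some cop occupies the same vertex as the robber. The cop number $c(G)$ is the least $m$ such that $m$ cops have a strategy that wins against every robber strategy. The order of a graph is its number of vertices. *)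

From HB Require Import structures.
From mathcomp Require Import all_boot all_order all_algebra.
Set Implicit Arguments. Unset Strict Implicit. Unset Printing Implicit Defensive.
Import Order.TTheory GRing.Theory Num.Theory.

Definition prime_power (q : nat) : Prop :=
  exists p n : nat, prime p /\ (0 < n)%N /\ q = (p ^ n)%N.

Definition simple_graph (T : finType) (e : rel T) : Prop :=
  symmetric e /\ irreflexive e.

Definition connected_graph (T : finType) (e : rel T) : Prop :=
  forall x y : T, connect e x y.

(* degree (the loops of the reflexive convention are not counted) *)
Definition degree (T : finType) (e : rel T) (x : T) : nat := #|[set y | e x y]|.

Definition step (T : finType) (e : rel T) (x y : T) : Prop := x = y \/ e x y.

(* cop_win e m c r : it is the cops' turn, the m cops stand at c, the robber
   at r, and the cops can force a capture in finitely many rounds. *)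
Inductive cop_win (T : finType) (e : rel T) (m : nat) :
    ('I_m -> T) -> T -> Prop :=
  | cw_caught (c : 'I_m -> T) (r : T) :
      (exists i, c i = r) -> cop_win e c r
  | cw_move (c : 'I_m -> T) (r : T) (c' : 'I_m -> T) :
      (forall i, step e (c i) (c' i)) ->
      ((exists i, c' i = r) \/
       (forall r', step e r r' -> cop_win e c' r')) ->
      cop_win e c r.

(* m cops have a winning strategy: they choose their vertices, then the
   robber chooses his, then the cops move first. *)
Definition cops_win (T : finType) (e : rel T) (m : nat) : Prop :=
  exists c : 'I_m -> T, forall r : T, cop_win e c r.

Definition is_cop_number (T : finType) (e : rel T) (n : nat) : Prop :=
  cops_win e n /\ forall m, (m < n)%N -> ~ cops_win e m.

(* Over the field with q elements, take the points of the affine plane and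
   the lines of s = q + 1 - k of its non-vertical parallel classes; incidence
   gives a bipartite graph without 4-cycles, since two lines meet at most
   once, whose points have degree s and whose lines have degree q.  In a graph
   without triangles and 4-cycles of minimum degree s, a cop standing off the
   closed neighbourhood of the robber dominates at most one of his neighbours,
   so against fewer than s cops the robber, starting away from all of them,
   always has a safe move (Aigner-Fromme).  Conversely q cops placed on the
   points (0, b) win: each moves to the line joining its point to the robber's
   point, and these lines are exactly the robber's neighbours. *)

From HB Require Import structures.
From mathcomp Require Import all_boot all_order all_algebra.
From mathcomp Require Import ring finfield zify.
From Stdlib Require Import Classical.
Import Order.TTheory GRing.Theory Num.Theory.
Set Implicit Arguments. Unset Strict Implicit.

Lemma cop_number_le (T : finType) (e : rel T) n0 :
  cops_win e n0 -> exists n, is_cop_number e n /\ n <= n0.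
Proof.
elim/ltn_ind: n0 => n0 IH W.
case: (classic (exists2 m, m < n0 & cops_win e m)) => [[m mn Wm]|noW].
  have [n [Hn nm]] := IH m mn Wm.
  by exists n; split=> //; apply: leq_trans nm (ltnW mn).
by exists n0; split=> //; split=> // m mn Wm; apply: noW; exists m.
Qed.

Lemma cop_win_adjacent (T : finType) (e : rel T) m (c : 'I_m -> T) r :
  (exists i, step e (c i) r) -> cop_win e c r.
Proof.
case=> i cir; apply: (@cw_move _ _ _ _ _ (fun j => if j == i then r else c j)).
  by move=> j; case: eqP => [->|_] //; left.
by left; exists i; rewrite eqxx.
Qed.

Section GirthFive.
Variables (T : finType) (e : rel T).
Hypothesis e_sym : symmetric e.
Hypothesis no_triangle : forall a b c, e a b -> e b c -> e a c -> False.
Hypothesis no_C4 : forall u w a b,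
  u != w -> a != b -> e u a -> e a w -> e u b -> e b w -> False.

Lemma card_bigcup_le (I : finType) (P : pred I) (A : I -> {set T}) :
  #|\bigcup_(i | P i) A i| <= \sum_(i | P i) #|A i|.
Proof.
elim/big_ind2: _ => [|U1 n1 U2 n2 le1 le2|i _]; rewrite ?cards0 //.
exact: leq_trans (leq_of_leqif (leq_card_setU _ _)) (leq_add le1 le2).
Qed.

Definition closed_nbhd (v : T) : {set T} := v |: [set y | e v y].

Lemma in_closed_nbhd v y : (y \in closed_nbhd v) = (y == v) || e v y.
Proof. by rewrite !inE. Qed.

Lemma step_closed_nbhd v y : step e v y -> y \in closed_nbhd v.
Proof. by rewrite in_closed_nbhd => -[->|->]; rewrite ?eqxx ?orbT. Qed.

Lemma card_nbhd_dominated v r :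
  v != r -> #|[set x | e r x] :&: closed_nbhd v| <= 1.
Proof.
move=> vr; apply/card_le1_eqP => x1 x2.
rewrite !inE => /andP[rx1 vx1] /andP[rx2 vx2].
apply/eqP/negPn/negP => x12.
case/orP: vx1 => [/eqP x1v|vx1]; case/orP: vx2 => [/eqP x2v|vx2].
- by rewrite x1v x2v eqxx in x12.
- by apply: (no_triangle rx1 _ rx2); rewrite x1v.
- by apply: (no_triangle rx2 _ rx1); rewrite x2v.
- by apply: (no_C4 vr x12 vx2 _ vx1 _); rewrite e_sym.
Qed.

Definition safe m (c : 'I_m -> T) r := forall i, r \notin closed_nbhd (c i).

Variable d : nat.
Hypothesis min_degree : forall x, d <= degree e x.

Lemma robber_escapes m (c c' : 'I_m -> T) r :
  m < d -> safe c r -> (forall i, step e (c i) (c' i)) ->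
  exists2 x, e r x & safe c' x.
Proof.
move=> md safe_r moves.
pose D := \bigcup_(i < m) ([set x | e r x] :&: closed_nbhd (c' i)).
have cardD : #|D| <= m.
  rewrite (leq_trans (card_bigcup_le _ _)) // -[m in _ <= m]card_ord -sum1_card.
  apply: leq_sum => i _; apply: card_nbhd_dominated; apply: contraNneq (safe_r i).
  by move=> <-; apply: step_closed_nbhd.
have : ~~ ([set x | e r x] \subset D).
  apply: contraL md => /subset_leq_card le_deg; rewrite -leqNgt.
  exact: leq_trans (min_degree r) (leq_trans le_deg cardD).
case/subsetPn => x; rewrite inE => rx xD; exists x => // i.
by apply: contra xD => xc; apply/bigcupP; exists i; rewrite // in_setI xc inE rx.
Qed.

Lemma safe_not_cop_win m (c : 'I_m -> T) r : m < d -> safe c r -> ~ cop_win e c r.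
Proof.
move=> md; rewrite /not; move: c r; fix IH 4 => c r safe_r win.
case: win safe_r => {c r} [c r [i <-] | c r c' moves next] safe_r.
  by move: (safe_r i); rewrite in_closed_nbhd eqxx.
case: next => [[i ci] | next].
  by move: (safe_r i); rewrite -ci step_closed_nbhd.
have [x rx safe_x] := robber_escapes md safe_r moves.
exact: IH safe_x (next x (or_intror rx)).
Qed.

Lemma cops_lose_of_min_degree m D :
  (forall x, degree e x <= D) -> m < d -> m * D.+1 < #|T| -> ~ cops_win e m.
Proof.
move=> max_degree md small [c win].
pose U := \bigcup_(i < m) closed_nbhd (c i).
have cardU : #|U| <= m * D.+1.
  rewrite (leq_trans (card_bigcup_le _ _)) //.
  rewrite -[m in m * _]card_ord -sum_nat_const leq_sum // => i _.
  by rewrite cardsU1 -add1n; apply: leq_add (leq_b1 _) (max_degree _).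
have [r rU] : exists r, r \notin U.
  apply/existsP; rewrite -negb_forall; apply: contraL small => /forallP Ur.
  rewrite -leqNgt (leq_trans _ cardU) // -cardsT subset_leq_card //.
  exact/subsetP.
apply: safe_not_cop_win md _ (win r) => i.
by apply: contra rU => rc; apply/bigcupP; exists i.
Qed.

End GirthFive.

Section Biaffine.
Local Open Scope ring_scope.
Variables (F : finFieldType) (s : nat).
Hypothesis s_gt1 : (1 < s)%N.
Hypothesis s_le_card : (s <= #|F|)%N.

Definition slope (i : 'I_s) : F := enum_val (widen_ord s_le_card i).

Lemma slope_inj : injective slope.
Proof. by move=> i j /enum_val_inj /(congr1 val) /= /val_inj. Qed.

(* Points are pairs (x, y); the line (i, b) is the line y = slope i * x + b. *)
Definition biaffine := (F * F + 'I_s * F)%type.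

Definition incident (p : F * F) (l : 'I_s * F) : bool :=
  p.2 == slope l.1 * p.1 + l.2.

Definition biaffine_adj : rel biaffine := fun u v =>
  match u, v with
  | inl p, inr l | inr l, inl p => incident p l
  | _, _ => false
  end.

Lemma biaffine_adj_sym : symmetric biaffine_adj.
Proof. by case=> [p|l] [p'|l']. Qed.

Lemma biaffine_adj_irr : irreflexive biaffine_adj.
Proof. by case. Qed.

Lemma biaffine_no_triangle a b c :
  biaffine_adj a b -> biaffine_adj b c -> biaffine_adj a c -> False.
Proof. by case: a => ?; case: b => ?; case: c. Qed.

Lemma incident_lineE p i b : incident p (i, b) = (b == p.2 - slope i * p.1).
Proof. by rewrite /incident [RHS]eq_sym subr_eq addrC. Qed.

Lemma incident_vertical_axis i b : incident (0, b) (i, b).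
Proof. by rewrite /incident /= mulr0 add0r. Qed.

Lemma incident_two_lines (a a' b b' x1 x2 y1 y2 : F) :
  y1 = a * x1 + b -> y1 = a' * x1 + b' -> y2 = a * x2 + b -> y2 = a' * x2 + b' ->
  (a = a' /\ b = b') \/ (x1 = x2 /\ y1 = y2).
Proof.
move=> h1 h1' h2 h2'.
have : (a - a') * (x1 - x2) == 0.
  apply/eqP; transitivity
    ((a * x1 + b) - (a * x2 + b) - ((a' * x1 + b') - (a' * x2 + b'))); first by ring.
  by rewrite -h1 -h1' -h2 -h2' subrr.
rewrite mulf_eq0 !subr_eq0 => /orP[/eqP aa' | /eqP xx].
  by left; split=> //; apply: (addrI (a * x1)); rewrite -h1 h1' aa'.
by right; rewrite h1 h2 xx.
Qed.

Lemma biaffine_no_C4 u w a b : u != w -> a != b ->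
  biaffine_adj u a -> biaffine_adj a w -> biaffine_adj u b -> biaffine_adj b w ->
  False.
Proof.
case: u w a b => [[x1 y1]|[i1 b1]] [[x2 y2]|[i2 b2]]
  [[x3 y3]|[i3 b3]] // [[x4 y4]|[i4 b4]] //=;
  rewrite /incident /= => nuw nab /eqP h1 /eqP h2 /eqP h3 /eqP h4.
- have [[/slope_inj ii bb]|[xx yy]] := incident_two_lines h1 h3 h2 h4.
    by move: nab; rewrite ii bb eqxx.
  by move: nuw; rewrite xx yy eqxx.
- have [[/slope_inj ii bb]|[xx yy]] := incident_two_lines h1 h2 h3 h4.
    by move: nuw; rewrite ii bb eqxx.
  by move: nab; rewrite xx yy eqxx.
Qed.

Lemma card_biaffine : #|{: biaffine}| = (#|F| * #|F| + s * #|F|)%N.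
Proof. by rewrite card_sum !card_prod card_ord. Qed.

Lemma degree_point p : degree biaffine_adj (inl p) = s.
Proof.
rewrite /degree; have -> : [set v | biaffine_adj (inl p) v] =
    (fun i => inr (i, p.2 - slope i * p.1)) @: [set: 'I_s].
  apply/setP => -[p'|[i b]]; rewrite inE /=; first by apply/esym/imsetP => -[].
  rewrite incident_lineE; apply/eqP/imsetP => [->|[j _ [-> ->]]] //.
  by exists i; rewrite ?inE.
by rewrite card_imset ?cardsT ?card_ord // => i j [].
Qed.

Lemma degree_line l : degree biaffine_adj (inr l) = #|F|.
Proof.
rewrite /degree; have -> : [set v | biaffine_adj (inr l) v] =
    (fun x => inl (x, slope l.1 * x + l.2)) @: [set: F].
  apply/setP => -[[x y]|l']; rewrite inE /=; last by apply/esym/imsetP => -[].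
  by apply/eqP/imsetP => [/= ->|[x' _ [-> ->]]] //; exists x.
by rewrite card_imset ?cardsT // => x x' [].
Qed.

Lemma lines_meet i j b b' :
  slope i != slope j -> exists p, incident p (i, b) && incident p (j, b').
Proof.
move=> ij; rewrite -subr_eq0 in ij.
pose x := (b' - b) / (slope i - slope j).
have slope_diff_x : (slope i - slope j) * x = b' - b by rewrite mulrC divfK.
exists (x, slope i * x + b); rewrite /incident eqxx /=; apply/eqP.
by rewrite -[b'](subrK b) -slope_diff_x; ring.
Qed.

Let i0 : 'I_s := Ordinal (ltnW s_gt1).
Let i1 : 'I_s := Ordinal s_gt1.

Lemma connect_vertical x y y' :
  connect biaffine_adj (inl (x, y)) (inl (x, y')).
Proof.
have i01 : slope i0 != slope i1 by apply/eqP => /slope_inj.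
have [p /andP[p0 p1]] := lines_meet (y - slope i0 * x) (y' - slope i1 * x) i01.
set l0 := (i0, y - slope i0 * x); set l1 := (i1, y' - slope i1 * x).
apply: (connect_trans (connect1 (_ : biaffine_adj _ (inr l0)))).
  by rewrite /= incident_lineE.
apply: (connect_trans (connect1 (_ : biaffine_adj _ (inl p)))) => //.
apply: (connect_trans (connect1 (_ : biaffine_adj _ (inr l1)))) => //.
by apply: connect1; rewrite /= incident_lineE.
Qed.

Lemma connect_origin v : connect biaffine_adj (inl (0, 0)) v.
Proof.
case: v => [[x y]|[i b]].
  set b := y - slope i0 * x.
  apply: connect_trans (connect_vertical 0 0 b) _.
  apply: (connect_trans (connect1 (_ : biaffine_adj _ (inr (i0, b))))).
    exact: incident_vertical_axis.
  by apply: connect1; rewrite /= incident_lineE.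
apply: connect_trans (connect_vertical 0 0 b) (connect1 _).
exact: incident_vertical_axis.
Qed.

Lemma biaffine_connected : connected_graph biaffine_adj.
Proof.
move=> u v; apply: (connect_trans (y := inl (0, 0))); last exact: connect_origin.
by rewrite (sym_connect_sym biaffine_adj_sym) connect_origin.
Qed.

Definition chase (p : F * F) (b : F) : biaffine :=
  if [pick i | incident p (i, b)] is Some i then inr (i, b) else inl (0, b).

Lemma step_chase p b : step biaffine_adj (inl (0, b)) (chase p b).
Proof.
rewrite /chase; case: pickP => [i _|_]; last by left.
by right; apply: incident_vertical_axis.
Qed.

Lemma chase_line p i b : p.1 != 0 -> incident p (i, b) -> chase p b = inr (i, b).
Proof.
move=> x0 pib; rewrite /chase; case: pickP => [j pjb|/(_ i)]; last by rewrite pib.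
suff -> : j = i by [].
apply: slope_inj; apply: (mulIf x0); apply: (addIr b).
by move: pjb pib; rewrite /incident => /eqP <- /eqP.
Qed.

Definition vertical_cops (j : 'I_#|F|) : biaffine := inl (0, enum_val j).

Lemma biaffine_cops_win : cops_win biaffine_adj #|F|.
Proof.
exists vertical_cops => -[[x y]|[i b]]; last first.
  apply: cop_win_adjacent; exists (enum_rank b); right.
  by rewrite /vertical_cops enum_rankK; apply: incident_vertical_axis.
have [-> | x0] := eqVneq x 0.
  by apply: cw_caught; exists (enum_rank y); rewrite /vertical_cops enum_rankK.
apply: (@cw_move _ _ _ _ _ (fun j => chase (x, y) (enum_val j))).
  by move=> j; apply: step_chase.
right => r' [<- | xr'].
  set b := y - slope i0 * x.
  apply: cop_win_adjacent; exists (enum_rank b); right.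
  by rewrite enum_rankK (@chase_line _ i0) //= incident_lineE.
case: r' xr' => [//|[i b]] /= xib.
apply: cw_caught; exists (enum_rank b).
by rewrite enum_rankK (@chase_line (x, y) i).
Qed.

Lemma biaffine_cop_number :
  exists n, is_cop_number biaffine_adj n /\ (s <= n <= #|F|)%N.
Proof.
have [n [cop_n n_le]] := cop_number_le biaffine_cops_win.
exists n; split=> //; rewrite n_le andbT leqNgt; apply/negP => n_lt.
have min_degree v : (s <= degree biaffine_adj v)%N.
  by case: v => [p|l]; rewrite ?degree_point ?degree_line.
have max_degree v : (degree biaffine_adj v <= #|F|)%N.
  by case: v => [p|l]; rewrite ?degree_point ?degree_line.
apply: (cops_lose_of_min_degree biaffine_adj_sym biaffine_no_triangle
  biaffine_no_C4 min_degree max_degree n_lt _ cop_n.1).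
by rewrite card_biaffine; move: n_lt s_le_card; clear; nia.
Qed.

End Biaffine.

Theorem theorem12 (k : nat -> nat)
  (k_pos : forall q, prime_power q -> (0 < k q)%N)
  (k_little_o : forall eps : rat, (0 < eps)%R ->
     exists N : nat, forall q, prime_power q -> (N <= q)%N ->
       ((k q)%:R < eps * q%:R)%R) :
  exists N : nat, forall q : nat, prime_power q -> (N <= q)%N ->
    exists (T : finType) (e : rel T),
      [/\ simple_graph e, connected_graph e,
          #|T| = (2 * q ^ 2 + q - k q * q)%N,
          (forall x : T, degree e x = (q + 1 - k q)%N \/ degree e x = q) &
          exists n : nat, is_cop_number e n /\ (q + 1 - k q <= n <= q)%N].
Proof.
have [N k_lt_q] := k_little_o 1%R ltr01.
exists N => q q_pp Nq.
have kq : k q < q by have := k_lt_q q q_pp Nq; rewrite mul1r ltr_nat.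
have k0 := k_pos q q_pp.
have [p [n [p_prime [n0 q_eq]]]] := q_pp.
have [F _ cardF] := pPrimePowerField p_prime n0.
rewrite -q_eq in cardF.
have s_gt1 : 1 < q + 1 - k q by lia.
have s_le_card : q + 1 - k q <= #|F| by rewrite cardF; lia.
exists _, (biaffine_adj s_le_card); split.
- by split; [apply: biaffine_adj_sym | apply: biaffine_adj_irr].
- exact: biaffine_connected.
- by rewrite card_biaffine cardF; nia.
- by case=> [p'|l]; [left; rewrite degree_point | right; rewrite degree_line].
- have [m [cop_m m_bounds]] := biaffine_cop_number s_gt1 s_le_card.
  by exists m; split=> //; rewrite cardF in m_bounds.
Qed.
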